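(* If the designer's preferences $(A_1,A_0,B_1,B_0)$ have at most one nonzero entry, i.e. are of one of the forms $(A_1,0,0,0)$, $(0,A_0,0,0)$, $(0,0,B_1,0)$, $(0,0,0,B_0)$, then a null equilibrium exists.
   Context: A unit mass of individuals has costs $\gamma_i\in\mathbb{R}$ of compliance ($\beta_i=1$) distributed according to a continuously differentiable CDF $F$ with log-concave density $f$ of full support on $\mathbb{R}$. A classifier $\delta=(\delta_1,\delta_0)\in[0,1]^2$ assigns $d_i$ with $\Pr[d_i=s_i\mid s_i]=\delta_{s_i}$ where $\Pr[s_i=\beta_i]=\phi\in(\tfrac12,1]$; individuals with $d_i=1$ receive reward $r\in\mathbb{R}$. Let $\rho(\delta)=(\delta_1+\delta_0-1)(2\phi-1)$; $\delta$ is null iff $\rho=0$. Individuals comply iff $\gamma_i\le r\rho$; compliance rate $\pi=F(r\rho)$. Designer payoffs $(A_1,A_0,B_1,B_0)\in\mathbb{R}_+^4$ ($A_1$: complier with $d_i=1$; $A_0$: complier with $d_i=0$; $B_1$: non-complier with $d_i=0$; $B_0$: non-complier with $d_i=1$), expected payoff $EU_D(\delta\mid r)=\pi[\phi(A_1\delta_1+A_0(1-\delta_1))+(1-\phi)(A_0\delta_0+A_1(1-\delta_0))]+(1-\pi)[\phi(B_1\delta_0+B_0(1-\delta_0))+(1-\phi)(B_0\delta_1+B_1(1-\delta_1))]$. Rewards are budget balanced and each individual also gets $t\pi$, $t\ge0$; individual $i$'s payoff from $r$ given $\delta$ is $U_i(r)=-\gamma_i+r\rho(1-F(r\rho))+tF(r\rho)$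 if $\gamma_i\le r\rho$, else $-r\rho F(r\rho)+tF(r\rho)$. The median individual has cost $\gamma_\mu$ with $F(\gamma_\mu)=\tfrac12$. An equilibrium is a pair $(r^*,\delta^* )$ such that $r^*$ maximizes $U_\mu(r)$ given $\delta^*$ and $\delta^*$ maximizes $EU_D(\delta\mid r^* )$ over $[0,1]^2$; a null equilibrium is one with $r^*=0$ and/or $\delta^*$ null. *)

From Stdlib Require Import Reals.
From Coquelicot Require Import Coquelicot.
Open Scope R_scope.

Definition is_cdf (F : R -> R) : Prop :=
  (forall x y, x <= y -> F x <= F y) /\
  is_lim F m_infty 0 /\ is_lim F p_infty 1.

Definition log_concave (f : R -> R) : Prop :=
  forall x y l, 0 <= l <= 1 ->
    l * ln (f x) + (1 - l) * ln (f y) <= ln (f (l * x + (1 - l) * y)).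

Definition admissible_cost_dist (F f : R -> R) : Prop :=
  is_cdf F /\
  (forall x, derivable_pt_lim F x (f x)) /\
  (forall x, continuity_pt f x) /\
  (forall x, 0 < f x) /\
  log_concave f.

Definition rho (phi d1 d0 : R) : R := (d1 + d0 - 1) * (2 * phi - 1).

Definition is_null (phi d1 d0 : R) : Prop := rho phi d1 d0 = 0.

Definition EU_D (F : R -> R) (phi A1 A0 B1 B0 r d1 d0 : R) : R :=
  let pi := F (r * rho phi d1 d0) in
  pi * (phi * (A1 * d1 + A0 * (1 - d1)) + (1 - phi) * (A0 * d0 + A1 * (1 - d0)))
  + (1 - pi) * (phi * (B1 * d0 + B0 * (1 - d0)) + (1 - phi) * (B0 * d1 + B1 * (1 - d1))).

Definition U_ind (F : R -> R) (phi t gamma d1 d0 r : R) : R :=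
  let x := r * rho phi d1 d0 in
  if Rle_dec gamma x then - gamma + x * (1 - F x) + t * F x
  else - x * F x + t * F x.

Definition in01 (x : R) : Prop := 0 <= x <= 1.

(* (r_star, delta_star) is an equilibrium when gmu is the median cost *)
Definition equilibrium (F : R -> R) (phi t gmu A1 A0 B1 B0 r d1 d0 : R) : Prop :=
  in01 d1 /\ in01 d0 /\
  (forall r', U_ind F phi t gmu d1 d0 r' <= U_ind F phi t gmu d1 d0 r) /\
  (forall e1 e0, in01 e1 -> in01 e0 ->
     EU_D F phi A1 A0 B1 B0 r e1 e0 <= EU_D F phi A1 A0 B1 B0 r d1 d0).

Definition null_equilibrium (F : R -> R) (phi t gmu A1 A0 B1 B0 r d1 d0 : R) : Prop :=
  equilibrium F phi t gmu A1 A0 B1 B0 r d1 d0 /\ (r = 0 \/ is_null phi d1 d0).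

Definition single_entry (A1 A0 B1 B0 : R) : Prop :=
  (A0 = 0 /\ B1 = 0 /\ B0 = 0) \/
  (A1 = 0 /\ B1 = 0 /\ B0 = 0) \/
  (A1 = 0 /\ A0 = 0 /\ B0 = 0) \/
  (A1 = 0 /\ A0 = 0 /\ B1 = 0).

(** With the reward [r = 0] every individual faces the same compliance rate
    [F 0] whatever the classifier, so the designer's payoff is affine in each
    of [delta1], [delta0] and the median individual is indifferent between all
    rewards once the classifier is null.  When only [A1] or [B0] is nonzero the
    designer wants [d_i = 1] exactly when [s_i = 1], i.e. [delta = (1, 0)];
    when only [A0] or [B1] is nonzero it wants the reverse, [delta = (0, 1)].
    Both classifiers are null, so [(0, delta)] is a null equilibrium. *)

From Stdlib Require Import Reals Lra.
From Coquelicot Require Import Coquelicot.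
Open Scope R_scope.

Lemma is_cdf_bounds (F : R -> R) (x : R) : is_cdf F -> 0 <= F x <= 1.
Proof.
  intros [Hmono [Hlim0 Hlim1]]. split.
  - apply (is_lim_le_loc F (fun _ => F x) m_infty 0 (F x)); auto.
    + exists x. intros y Hy. apply Hmono. lra.
    + apply is_lim_const.
  - apply (is_lim_le_loc (fun _ => F x) F p_infty (F x) 1); auto.
    + exists x. intros y Hy. apply Hmono. lra.
    + apply is_lim_const.
Qed.

Lemma is_null_of_sum1 (phi d1 d0 : R) : d1 + d0 = 1 -> is_null phi d1 d0.
Proof. unfold is_null, rho. intros ->. ring. Qed.

Lemma U_ind_null (F : R -> R) (phi t gamma d1 d0 r r' : R) :
  is_null phi d1 d0 -> U_ind F phi t gamma d1 d0 r = U_ind F phi t gamma d1 d0 r'.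
Proof. unfold is_null, U_ind. intros ->. now rewrite !Rmult_0_r. Qed.

Lemma null_equilibrium_of_best_response (F : R -> R) (phi t gmu A1 A0 B1 B0 r d1 d0 : R) :
  is_null phi d1 d0 -> in01 d1 -> in01 d0 ->
  (forall e1 e0, in01 e1 -> in01 e0 ->
     EU_D F phi A1 A0 B1 B0 r e1 e0 <= EU_D F phi A1 A0 B1 B0 r d1 d0) ->
  null_equilibrium F phi t gmu A1 A0 B1 B0 r d1 d0.
Proof.
  intros Hnull Hd1 Hd0 Hbest.
  split; [| now right].
  repeat split; try apply Hd1; try apply Hd0; [| exact Hbest].
  intros r'. rewrite (U_ind_null F phi t gmu d1 d0 r' r Hnull). apply Rle_refl.
Qed.

Lemma EU_D_relabel (F : R -> R) (phi A1 A0 B1 B0 r d1 d0 : R) :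
  EU_D F phi A1 A0 B1 B0 r d1 d0 = EU_D F phi A0 A1 B0 B1 (- r) (1 - d1) (1 - d0).
Proof.
  unfold EU_D, rho.
  replace (- r * ((1 - d1 + (1 - d0) - 1) * (2 * phi - 1)))
    with (r * ((d1 + d0 - 1) * (2 * phi - 1))) by ring.
  ring.
Qed.

Lemma EU_D_reward0_le_truthful (F : R -> R) (phi A1 B0 e1 e0 : R) :
  0 <= F 0 <= 1 -> 0 <= phi <= 1 -> 0 <= A1 -> 0 <= B0 -> in01 e1 -> in01 e0 ->
  EU_D F phi A1 0 0 B0 0 e1 e0 <= EU_D F phi A1 0 0 B0 0 1 0.
Proof.
  intros HF Hphi HA1 HB0 He1 He0. unfold in01 in *.
  unfold EU_D. rewrite !Rmult_0_l.
  (* the loss is [F 0 * A1 * w1 + (1 - F 0) * B0 * w0] with weights [w1], [w0] in [0, 1] *)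
  assert (Hw1 : 0 <= phi * (1 - e1) + (1 - phi) * e0) by nra.
  assert (Hw0 : 0 <= phi * e0 + (1 - phi) * (1 - e1)) by nra.
  assert (0 <= F 0 * (A1 * (phi * (1 - e1) + (1 - phi) * e0))).
  { apply Rmult_le_pos; [lra | now apply Rmult_le_pos]. }
  assert (0 <= (1 - F 0) * (B0 * (phi * e0 + (1 - phi) * (1 - e1)))).
  { apply Rmult_le_pos; [lra | now apply Rmult_le_pos]. }
  nra.
Qed.

Lemma EU_D_reward0_le_inverted (F : R -> R) (phi A0 B1 e1 e0 : R) :
  0 <= F 0 <= 1 -> 0 <= phi <= 1 -> 0 <= A0 -> 0 <= B1 -> in01 e1 -> in01 e0 ->
  EU_D F phi 0 A0 B1 0 0 e1 e0 <= EU_D F phi 0 A0 B1 0 0 0 1.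
Proof.
  intros HF Hphi HA0 HB1 He1 He0.
  rewrite !(EU_D_relabel F phi 0 A0 B1 0 0), Ropp_0.
  replace (1 - 0) with 1 by ring. replace (1 - 1) with 0 by ring.
  apply EU_D_reward0_le_truthful; auto; unfold in01 in *; lra.
Qed.

Lemma single_entry_cases (A1 A0 B1 B0 : R) :
  single_entry A1 A0 B1 B0 -> (A0 = 0 /\ B1 = 0) \/ (A1 = 0 /\ B0 = 0).
Proof. unfold single_entry. tauto. Qed.

Theorem corollary3 (F f : R -> R) (phi t gmu A1 A0 B1 B0 : R) :
  admissible_cost_dist F f ->
  1 / 2 < phi <= 1 ->
  0 <= t ->
  F gmu = 1 / 2 ->
  0 <= A1 -> 0 <= A0 -> 0 <= B1 -> 0 <= B0 ->
  single_entry A1 A0 B1 B0 ->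
  exists r d1 d0, null_equilibrium F phi t gmu A1 A0 B1 B0 r d1 d0.
Proof.
  intros [Hcdf _] Hphi _ _ HA1 HA0 HB1 HB0 Hsingle.
  assert (HF0 : 0 <= F 0 <= 1) by now apply is_cdf_bounds.
  assert (Hphi01 : 0 <= phi <= 1) by lra.
  assert (H0 : in01 0) by (unfold in01; lra).
  assert (H1 : in01 1) by (unfold in01; lra).
  exists 0.
  destruct (single_entry_cases A1 A0 B1 B0 Hsingle) as [[-> ->] | [-> ->]].
  - exists 1, 0. apply null_equilibrium_of_best_response; auto.
    + apply is_null_of_sum1. ring.
    + intros e1 e0. now apply EU_D_reward0_le_truthful.
  - exists 0, 1. apply null_equilibrium_of_best_response; auto.
    + apply is_null_of_sum1. ring.
    + intros e1 e0. now apply EU_D_reward0_le_inverted.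
Qed.
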